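(* Let $T>0$, $\rho>0$, and let $a,b:[0,\infty)\to[0,\infty)$ and $\mathfrak n$ satisfy: $a,b\in\mathcal C^0([0,\infty))\cap\mathcal C^1(0,\infty)$; $a',b'$ bounded on $(1,\infty)$; $a(x)>0$ for $x>0$ and $1/a\in L^1(0,1)$; $\Phi:=b/a$ has a limit $\Phi_0$ at $0^+$ with $\Phi_0<\rho$ and $\Phi'\in L^1(0,1)$; $\mathfrak n$ is nonnegative and continuous on $[\Phi_0,\infty)$. Let $u^{\rm in}\in(\Phi_0,\rho]$ and $\delta>0$ with $2\delta<u^{\rm in}-\Phi_0$, and let $\mathcal B_\delta([0,T))$ be the set of continuous $u:[0,T)\to[0,\rho]$ with $u(0)=u^{\rm in}$ and $\Phi_0+\delta\le u(t)\le\rho$ for all $t\in[0,T)$. For $u\in\mathcal B_\delta([0,T))$ and $x>0$, let $s\mapsto X(s;0,x)$ denote the solution on $[0,T)$ of $\partial_sX(s;0,x)=a(X(s;0,x))u(s)-b(X(s;0,x))$, $X(0;0,x)=x$. Let $\{u^n\}\subset\mathcal B_\delta([0,T))$ converge uniformly to $u$, with corresponding characteristics $X^n$. Then for each $x>0$, $X^n(\cdot;0,x)$ converges uniformly to $X(\cdot;0,x)$ on $[0,T)$ as $n\to\infty$.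
   Context: For such $u$ the characteristic $X(\cdot;0,x)$ exists, is unique and stays in $(0,\infty)$ on the whole interval $[0,T)$. *)

From HB Require Import structures.
From mathcomp Require Import all_boot all_order all_algebra.
From mathcomp Require Import all_classical all_reals all_analysis.
Set Implicit Arguments. Unset Strict Implicit. Unset Printing Implicit Defensive.
Import Order.TTheory GRing.Theory Num.Theory.
Import numFieldNormedType.Exports.
Local Open Scope classical_set_scope.
Local Open Scope ring_scope.

Definition unif_cvg_on {R : realType} (D : set R) (fn : nat -> R -> R) (f : R -> R) : Prop :=
  forall eps : R, 0 < eps -> exists N : nat, forall n : nat, (N <= n)%N ->
    forall s, D s -> `|fn n s - f s| < eps.

Definition in_Bdelta {R : realType} (T rho Phi0 delta uin : R) (u : R -> R) : Prop :=
  {within [set t | 0 <= t < T], continuous u} /\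
  u 0 = uin /\
  (forall t, 0 <= t < T -> 0 <= u t <= rho) /\
  (forall t, 0 <= t < T -> Phi0 + delta <= u t <= rho).

Definition characteristic {R : realType} (a b u : R -> R) (T x : R) (X : R -> R) : Prop :=
  X 0 = x /\
  {within [set s | 0 <= s < T], continuous X} /\
  (forall s, 0 <= s < T -> 0 <= X s) /\
  (forall s, 0 < s < T -> derivable X s 1 /\ derive1 X s = a (X s) * u s - b (X s)).

From HB Require Import structures.
From mathcomp Require Import all_boot all_order all_algebra.
From mathcomp Require Import all_classical all_reals all_analysis.
From mathcomp Require Import ring lra.
Import Order.TTheory GRing.Theory Num.Theory.
Import numFieldNormedType.Exports.
Local Open Scope classical_set_scope.
Local Open Scope ring_scope.

(* The characteristics X^n(.;0,x) and X(.;0,x) stay, uniformly in n, in a compact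
   interval [m, q] of (0, oo).  Since b/a tends to Phi0 < Phi0 + delta <= u at 0+, the
   drift a(y) u - b(y) is positive for 0 < y < e, so a characteristic starting at x never
   goes below m = min(x, e/2) (a barrier argument by continuous induction).  Since a' is
   bounded at infinity, a grows at most linearly and Gronwall's lemma bounds the
   characteristics from above.  On [m, q] the C^1 functions a and b are Lipschitz, so the
   squared distance D of X^n and X satisfies D' <= g (D + eta^2), where eta bounds
   |u^n - u|.  Gronwall's lemma again gives |X^n - X| <= e^(gT) eta, and the uniform
   convergence of u^n carries over to X^n. *)

Section RealInequalities.
Set Implicit Arguments.
Unset Strict Implicit.
Context {R : realDomainType}.

Lemma double_mul_le_of_normr_le (d e L A eta : R) : 0 <= L -> 0 <= A ->
  `|e| <= L * `|d| + A * eta -> 2 * d * e <= (2 * L + A) * d ^+ 2 + A * eta ^+ 2.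
Proof.
move=> L0 A0 e_le.
have dd : `|d| * `|d| = d ^+ 2 by rewrite -normrM ger0_norm -expr2 ?sqr_ge0.
have de : d * e <= `|d| * (L * `|d| + A * eta).
  by rewrite (le_trans (ler_norm _)) // normrM ler_wpM2l.
have young : 2 * (`|d| * eta) <= d ^+ 2 + eta ^+ 2.
  by have := sqr_ge0 (`|d| - eta); rewrite sqrrB -dd; lra.
have := ler_wpM2l A0 young; nra.
Qed.

Lemma drift_dist_le (a1 a2 b1 b2 w1 w2 d La Lb A rho eta : R) :
  `|a1 - a2| <= La * d -> `|b1 - b2| <= Lb * d -> 0 <= w1 <= rho -> `|a2| <= A ->
  `|w1 - w2| <= eta ->
  `|a1 * w1 - b1 - (a2 * w2 - b2)| <= (La * rho + Lb) * d + A * eta.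
Proof.
move=> ha hb /andP[w10 w1rho] ha2 hw.
have -> : a1 * w1 - b1 - (a2 * w2 - b2) = (a1 - a2) * w1 + a2 * (w1 - w2) - (b1 - b2) by ring.
have ha_w : `|(a1 - a2) * w1| <= La * rho * d.
  by rewrite normrM (ger0_norm w10) mulrAC; apply: ler_pM.
have ha2_w : `|a2 * (w1 - w2)| <= A * eta by rewrite normrM; apply: ler_pM.
have := ler_normD ((a1 - a2) * w1) (a2 * (w1 - w2)).
have := ler_normB ((a1 - a2) * w1 + a2 * (w1 - w2)) (b1 - b2).
rewrite [(_ + Lb) * d]mulrDl; lra.
Qed.

End RealInequalities.

Section RealAnalysis.
Set Implicit Arguments.
Unset Strict Implicit.
Context {R : realType}.

Lemma continuous_induction (T : R) (Q : R -> Prop) :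
  (forall s, 0 <= s < T -> (forall r, 0 <= r < s -> Q r) ->
     exists2 e, 0 < e & forall r, s <= r < s + e -> r < T -> Q r) ->
  forall r, 0 <= r < T -> Q r.
Proof.
move=> step r /andP[r0 rT].
have T0 : 0 < T by exact: le_lt_trans r0 rT.
pose S := [set s | 0 <= s <= T /\ forall r, 0 <= r < s -> Q r].
have S0 : S 0 by split=> [|q /andP[q0 /(le_lt_trans q0)]]; rewrite ?lexx ?ltW ?ltxx.
have supS : has_sup S by split; [exists 0 | exists T => s [/andP[]]].
pose s := sup S.
have Q_lt_s q : 0 <= q < s -> Q q.
  move=> /andP[q0 qs].
  have [e [_ Qe] lte] := sup_adherent (ltac:(by rewrite subr_gt0) : 0 < s - q) supS.
  by apply: Qe; rewrite q0 /=; move: lte; rewrite opprB addrCA subrr addr0.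
have s0 : 0 <= s by apply: ub_le_sup => //; exists T => ? [/andP[]].
have [sT|Ts] := ltP s T; last by apply: Q_lt_s; rewrite r0 (lt_le_trans rT Ts).
have [e e0 Qe] := step s ltac:(by rewrite s0 sT) Q_lt_s.
pose s' := Num.min (s + e / 2) T.
suff : s' <= s by rewrite ge_min => /orP[|]; [lra | rewrite leNgt sT].
apply: ub_le_sup; first by exists T => ? [/andP[]].
split=> [|q /andP[q0]].
  by rewrite le_min ge_min lexx orbT (ltW T0) andbT; lra.
have [qs _|sq] := ltP q s; first by apply: Q_lt_s; rewrite q0.
by rewrite lt_min => /andP[qs' qT]; apply: Qe; rewrite ?sq //=; lra.
Qed.

Lemma within_continuous_dist_lt (A : set R) (f : R -> R) (x e : R) :
  {within A, continuous f} -> A x -> 0 < e ->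
  exists2 d, 0 < d & forall r, A r -> `|x - r| < d -> `|f x - f r| < e.
Proof.
move=> cf Ax e0.
have /cvgrPdist_lt/(_ e e0)/nbhs_ballP[d d0 fd] := (subspace_continuousP _ f).1 cf x Ax.
by exists d => // r Ar xr; apply: fd.
Qed.

Lemma within_continuous_ge_left (Y : R -> R) (T m s : R) :
  {within [set t | 0 <= t < T], continuous Y} -> 0 < s < T ->
  (forall r, 0 <= r < s -> m <= Y r) -> m <= Y s.
Proof.
move=> cY /andP[s0 sT] mY; rewrite leNgt; apply/negP => Ysm.
have sI : 0 <= s < T by rewrite (ltW s0).
have [d d0 Yd] := within_continuous_dist_lt cY sI (ltac:(by rewrite subr_gt0) : 0 < m - Y s).
pose r := s - Num.min s d / 2.
have md0 : 0 < Num.min s d by rewrite lt_min s0 d0.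
have [ms md] : Num.min s d <= s /\ Num.min s d <= d by rewrite !ge_min !lexx orbT.
have r0 : 0 <= r by rewrite /r; lra.
have rs : r < s by rewrite /r; lra.
have sr : `|s - r| < d by rewrite /r opprB addrC subrK gtr0_norm; lra.
have := Yd r ltac:(by rewrite /= r0 (lt_trans rs sT)) sr.
have := mY r ltac:(by rewrite r0 rs); have := ler_norm (Y r - Y s).
by rewrite distrC; lra.
Qed.

Lemma lbound_barrier (Y : R -> R) (T m e : R) :
  0 < m -> m < e -> m <= Y 0 ->
  {within [set s | 0 <= s < T], continuous Y} ->
  (forall r, 0 < r < T -> derivable Y r 1) ->
  (forall r, 0 < r < T -> 0 < Y r < e -> 0 <= derive1 Y r) ->
  forall s, 0 <= s < T -> m <= Y s.
Proof.
move=> m0 me mY0 cY dY Y'ge0; apply: continuous_induction => s /andP[s0 sT] IH.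
have mYs : m <= Y s.
  have [<-|s_neq0] := eqVneq 0 s; first exact: mY0.
  by apply: within_continuous_ge_left cY _ IH; rewrite lt_def eq_sym s_neq0 s0.
have sI : 0 <= s < T by rewrite s0.
(* Near s, Y stays above m by continuity if Y s >= e, and is nondecreasing if Y s < e. *)
have [eYs|Yse] := leP e (Y s).
  have [d d0 Yd] := within_continuous_dist_lt cY sI (ltac:(lra) : 0 < Y s - m).
  exists d => // r /andP[sr rsd] rT.
  have := Yd r ltac:(by rewrite /= rT andbT; lra) ltac:(by rewrite distrC ger0_norm; lra).
  have := ler_norm (Y s - Y r); lra.
have [d d0 Yd] := within_continuous_dist_lt cY sI
  (ltac:(by rewrite lt_min subr_gt0 Yse; lra) : 0 < Num.min (e - Y s) (Y s)).
exists d => // r /andP[sr rsd] rT; apply: le_trans mYs _.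
have inT t : t \in `]s, r[ -> 0 < t < T /\ `|s - t| < d.
  rewrite in_itv /= => /andP[st tr]; rewrite (le_lt_trans s0 st) (lt_trans tr rT).
  by split => //; rewrite distrC ger0_norm; lra.
apply: (ger0_derive1_le_cc (a := s) (b := r)); rewrite ?in_itv /= ?lexx ?sr //.
- by move=> t /inT[/dY].
- move=> t /inT[tI st]; apply: Y'ge0 => //.
  have /andP[/ltW t0 tT] := tI; have := Yd t ltac:(by rewrite /= t0 tT) st.
  rewrite lt_min => /andP[h1 h2]; have := ler_norm (Y s - Y t); have := ler_norm (Y t - Y s).
  by rewrite distrC; lra.
- apply: continuous_subspaceW cY => t; rewrite /= in_itv /= => /andP[st tr].
  by rewrite (le_trans s0 st) (le_lt_trans tr rT).
Qed.

Lemma gronwall_affine (f : R -> R) (T g c : R) :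
  {within [set s | 0 <= s < T], continuous f} ->
  (forall s, 0 < s < T -> derivable f s 1) ->
  (forall s, 0 < s < T -> derive1 f s <= g * (f s + c)) ->
  forall s, 0 <= s < T -> f s + c <= (f 0 + c) * expR (g * s).
Proof.
move=> cf df f'le s /andP[s0 sT].
pose h := (fun r => expR (- (g * r))) \* (fun r => f r + c).
have dh r : 0 < r < T ->
    is_derive r 1 h (expR (- (g * r)) * (derive1 f r - g * (f r + c))).
  move=> rI; have := derivableP (df r rI); rewrite -derive1E => fr.
  by rewrite /h; apply: is_derive_eq; rewrite /GRing.scale /=; ring.
have inT r : r \in `]0, s[ -> 0 < r < T.
  by rewrite in_itv /= => /andP[-> rs]; rewrite (lt_trans rs sT).
have : h s <= h 0.
  apply: (ler0_derive1_le_cc (a := 0) (b := s)); rewrite ?in_itv /= ?lexx ?s0 //.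
  - by move=> r /inT /dh [].
  - move=> r /inT rI; rewrite derive1E; have /@derive_val -> := dh r rI.
    by rewrite pmulr_rle0 ?expR_gt0 // subr_le0 f'le.
  - have sub : `[0, s] `<=` [set r | 0 <= r < T].
      by move=> r /=; rewrite in_itv /= => /andP[-> rs]; rewrite (le_lt_trans rs sT).
    move=> r; apply: continuousM; last first.
      by apply: continuousD; [exact: (continuous_subspaceW sub cf) | exact: cst_continuous].
    apply: continuous_subspaceT => {}r.
    exact/differentiable_continuous/derivable1_diffP.
rewrite /h /= mulr0 oppr0 expR0 mul1r expRN mulrC -ler_pdivrMr ?expR_gt0 //.
Qed.

Lemma klipschitz_itv_le (f : R -> R) (L p q y z : R) : L.-lipschitz_`[p, q] f ->
  y \in `[p, q] -> z \in `[p, q] -> `|f y - f z| <= L * `|y - z|.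
Proof. by move=> fL yI zI; exact: (fL (y, z)). Qed.

Lemma derivable_lipschitz_cc (f : R -> R) (p q : R) : p <= q ->
  {in `[p, q], forall y, derivable f y 1} -> {within `[p, q], continuous (derive1 f)} ->
  exists2 L, 0 <= L & L.-lipschitz_`[p, q] f.
Proof.
move=> pq df cf'.
have [c _ f'c] := EVT_max pq (fun y => continuous_comp (cf' y) (@norm_continuous _ R _)).
exists `|derive1 f c| => //; rewrite /dominated_by /globally => -[y z] /= [yI zI].
wlog yz : y z yI zI / y <= z.
  move=> wlog_yz; have [|/ltW zy] := leP y z; first exact: wlog_yz.
  by rewrite distrC (distrC y); apply: wlog_yz.
have sub : {subset `[y, z] <= `[p, q]}.
  by apply: subitvP; rewrite subitvE !bnd_simp (itvP yI) (itvP zI).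
have [w wI fzy] := MVT_segment yz
  (fun w wI => derivableP (df w (sub _ (subset_itv_oo_cc wI))))
  (derivable_within_continuous (fun w wI => df w (sub _ wI))).
rewrite distrC fzy normrM distrC ler_wpM2r //.
by rewrite -derive1E; apply: f'c; exact: sub.
Qed.

Lemma derivable_lipschitz_pos (f : R -> R) (m q : R) : 0 < m -> m <= q ->
  (forall y, 0 < y -> derivable f y 1) -> {in [set y | 0 < y], continuous (derive1 f)} ->
  exists2 L, 0 <= L & L.-lipschitz_`[m, q] f.
Proof.
move=> m0 mq df cf'.
have mq_gt0 y : y \in `[m, q] -> 0 < y by rewrite in_itv /= => /andP[/(lt_le_trans m0)].
apply: derivable_lipschitz_cc mq _ _; first by move=> y /mq_gt0; exact: df.
apply: continuous_in_subspaceT => y; rewrite inE => /mq_gt0 y0.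
by apply: cf'; rewrite inE.
Qed.

Lemma linear_growth_of_derive1_bounded (f : R -> R) (M : R) :
  {within [set y | 0 <= y], continuous f} ->
  (forall y, 1 < y -> derivable f y 1) -> (forall y, 1 < y -> `|derive1 f y| <= M) ->
  exists c M', [/\ 0 <= c, 0 < M' & forall y, 0 <= y -> f y <= M' * (y + c)].
Proof.
move=> cf df f'M.
have sub01 : [set` `[0, 1]] `<=` [set y : R | 0 <= y] by move=> y /andP[].
have [c _ fc] := EVT_max ler01 (continuous_subspaceW sub01 cf).
have M'1 : 1 <= Num.max M 1 by rewrite le_max lexx orbT.
have M'0 : 0 < Num.max M 1 by exact: lt_le_trans ltr01 M'1.
have MM' : M <= Num.max M 1 by rewrite le_max lexx.
exists `|f c|, (Num.max M 1); split => // y y0.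
have fc_M' : `|f c| <= Num.max M 1 * `|f c| by rewrite ler_peMl.
have fc_le t : t \in `[0, 1] -> f t <= `|f c|.
  by move=> /fc ftc; exact: le_trans ftc (ler_norm _).
have [y1|y1] := leP y 1.
  have := fc_le y ltac:(by rewrite in_itv /= y0 y1).
  have := mulr_ge0 (ltW M'0) y0; lra.
have sub1y : [set` `[1, y]] `<=` [set y : R | 0 <= y].
  by move=> t /andP[/(le_trans ler01)].
have w1 w : w \in `]1, y[ -> 1 < w by rewrite in_itv /= => /andP[].
have [w /w1 {}w1 fyw] := MVT y1
  (fun w wI => derivableP (df w (w1 w wI))) (continuous_subspaceW sub1y cf).
have f'w : derive1 f w <= Num.max M 1.
  exact: le_trans (ler_norm _) (le_trans (f'M w w1) MM').
have := fc_le 1 ltac:(by rewrite in_itv /= ler01 lexx).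
have := ler_wpM2r (ltW (ltac:(by rewrite subr_gt0) : 0 < y - 1)) f'w.
rewrite -derive1E in fyw; have := mulr_ge0 (ltW M'0) (ltW (lt_trans ltr01 y1)).
nra.
Qed.

Lemma unif_cvg_on_transfer (D E : set R) (vn : nat -> R -> R) (v : R -> R)
    (fn : nat -> R -> R) (f : R -> R) (K : R) :
  0 <= K -> unif_cvg_on E vn v ->
  (forall n eta, 0 < eta -> (forall t, E t -> `|vn n t - v t| <= eta) ->
     forall s, D s -> `|fn n s - f s| <= K * eta) ->
  unif_cvg_on D fn f.
Proof.
move=> K0 vn_v stable eps eps0.
have K1 : 0 < K + 1 by lra.
have eta0 : 0 < eps / (K + 1) by rewrite divr_gt0.
have [N vnN] := vn_v _ eta0.
exists N => n nN s Ds; apply: (le_lt_trans (stable n _ eta0 _ s Ds)).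
  by move=> t Et; exact/ltW/vnN.
by rewrite mulrA ltr_pdivrMr //; nra.
Qed.

End RealAnalysis.

Section Characteristics.
Set Implicit Arguments.
Unset Strict Implicit.
Context {R : realType}.
Variables (a b : R -> R) (T rho : R).

Lemma drift_gt0_near0 (Phi0 delta : R) : 0 < delta -> (forall y, 0 < y -> 0 < a y) ->
  (fun y => b y / a y) y @[y --> 0^'+] --> Phi0 ->
  exists2 e, 0 < e & forall y w, 0 < y < e -> Phi0 + delta <= w -> 0 < a y * w - b y.
Proof.
move=> delta0 a_gt0 /cvgrPdist_lt /(_ _ delta0) /nbhs_ballP[e e0 Phi_near].
exists e => // y w /andP[y0 ye] w_ge; have ay0 := a_gt0 _ y0.
have : `|Phi0 - b y / a y| < delta.
  by apply: Phi_near => //; rewrite -ball_normE /ball_ /= sub0r normrN gtr0_norm.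
rewrite subr_gt0 -(ltr_pdivrMl _ _ ay0) mulrC distrC => /(le_lt_trans (ler_norm _)).
lra.
Qed.

Lemma characteristic_ge (v Y : R -> R) (x m e : R) :
  0 < m -> m <= x -> m < e ->
  (forall y t, 0 < y < e -> 0 < t < T -> 0 <= a y * v t - b y) ->
  characteristic a b v T x Y -> forall s, 0 <= s < T -> m <= Y s.
Proof.
move=> m0 mx me drift_ge0 [Y0 [cY [_ dY]]].
apply: lbound_barrier me _ cY _ _ => //; first by rewrite Y0.
  by move=> r /dY[].
by move=> r rI YI; rewrite (dY r rI).2 drift_ge0.
Qed.

Lemma characteristic_le (v Y : R -> R) (x c M : R) :
  0 <= c -> 0 <= M -> (forall y, 0 <= y -> 0 <= a y <= M * (y + c)) ->
  (forall y, 0 <= y -> 0 <= b y) -> (forall t, 0 <= t < T -> 0 <= v t <= rho) ->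
  characteristic a b v T x Y -> forall s, 0 <= s < T -> Y s <= (x + c) * expR (rho * M * T).
Proof.
move=> c0 M0 a_le b_ge0 v_le [Y0 [cY [Y_ge0 dY]]] s sI.
have rho0 : 0 <= rho by have /andP[/le_trans] := v_le s sI; apply.
have Y'_le r : 0 < r < T -> derive1 Y r <= rho * M * (Y r + c).
  move=> rI; have r0 : 0 <= r < T by case/andP: rI => /ltW -> ->.
  have /andP[vr0 vr] := v_le r r0; have /andP[aY0 aY] := a_le _ (Y_ge0 r r0).
  have := b_ge0 _ (Y_ge0 r r0); have := ler_pM aY0 vr0 aY vr.
  rewrite (dY r rI).2; nra.
have x0 : 0 <= x by rewrite -Y0 Y_ge0 // lexx; case/andP: sI; exact: le_lt_trans.
have := gronwall_affine cY (fun r rI => (dY r rI).1) Y'_le sI.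
have : expR (rho * M * s) <= expR (rho * M * T).
  by rewrite ler_expR ler_wpM2l ?mulr_ge0 //; case/andP: sI => _ /ltW.
move=> /(ler_wpM2l (addr_ge0 x0 c0)); rewrite Y0; lra.
Qed.

Lemma characteristic_uniform_bounds (Phi0 delta uin x c M : R) :
  0 < delta -> 0 < x -> (forall y, 0 < y -> 0 < a y) ->
  (fun y => b y / a y) y @[y --> 0^'+] --> Phi0 ->
  0 <= c -> 0 <= M -> (forall y, 0 <= y -> 0 <= a y <= M * (y + c)) ->
  (forall y, 0 <= y -> 0 <= b y) ->
  exists m q, [/\ 0 < m, m <= q & forall v Y, in_Bdelta T rho Phi0 delta uin v ->
    characteristic a b v T x Y -> forall s, 0 <= s < T -> Y s \in `[m, q]].
Proof.
move=> delta0 x0 a_gt0 Phi_lim c0 M0 a_le b_ge0.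
have [e e0 drift_gt0] := drift_gt0_near0 delta0 a_gt0 Phi_lim.
pose m := Num.min x (e / 2); pose q := Num.max m ((x + c) * expR (rho * M * T)).
have m0 : 0 < m by rewrite lt_min x0 divr_gt0.
have mx : m <= x by rewrite ge_min lexx.
have me : m < e by rewrite gt_min; apply/orP; right; lra.
exists m, q; split; rewrite ?le_max ?lexx // => v Y [_ [_ [v_le v_ge]]] Y_char s sI.
rewrite in_itv /= le_max; apply/andP; split.
  apply: characteristic_ge m0 mx me _ Y_char s sI => y t yI /andP[/ltW t0 tT].
  by apply/ltW/drift_gt0 => //; have /andP[] := v_ge t ltac:(by rewrite t0 tT).
by apply/orP; right; apply: characteristic_le c0 M0 a_le b_ge0 v_le Y_char s sI.
Qed.

Variables (m q La Lb A : R).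
Hypotheses (La0 : 0 <= La) (Lb0 : 0 <= Lb).
Hypotheses (a_lip : La.-lipschitz_`[m, q] a) (b_lip : Lb.-lipschitz_`[m, q] b).
Hypothesis a_bound : forall y, y \in `[m, q] -> `|a y| <= A.

Lemma characteristic_stable (v1 v2 Y1 Y2 : R -> R) (x eta : R) :
  (forall t, 0 <= t < T -> 0 <= v1 t <= rho) ->
  (forall t, 0 <= t < T -> `|v1 t - v2 t| <= eta) ->
  characteristic a b v1 T x Y1 -> characteristic a b v2 T x Y2 ->
  (forall s, 0 <= s < T -> Y1 s \in `[m, q]) -> (forall s, 0 <= s < T -> Y2 s \in `[m, q]) ->
  forall s, 0 <= s < T -> `|Y1 s - Y2 s| <= expR ((2 * (La * rho + Lb) + A + 1) * T) * eta.
Proof.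
move=> v1_le v12 [Y10 [cY1 [_ dY1]]] [Y20 [cY2 [_ dY2]]] Y1I Y2I s sI.
have rho0 : 0 <= rho by have /andP[/le_trans] := v1_le s sI; apply.
have eta0 : 0 <= eta := le_trans (normr_ge0 _) (v12 s sI).
have A0 : 0 <= A := le_trans (normr_ge0 _) (a_bound (Y1I s sI)).
have L0 : 0 <= La * rho + Lb by rewrite addr_ge0 ?mulr_ge0.
pose g := 2 * (La * rho + Lb) + A + 1.
pose D := (Y1 - Y2) \* (Y1 - Y2).
have cD : {within [set s | 0 <= s < T], continuous D}.
  move=> r; apply: continuousM; apply: continuousB;
    [exact: cY1 | exact: cY2 | exact: cY1 | exact: cY2].
have dD r : 0 < r < T ->
    is_derive r 1 D (2 * (Y1 r - Y2 r) * (derive1 Y1 r - derive1 Y2 r)).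
  move=> rI; have := derivableP (dY1 r rI).1; have := derivableP (dY2 r rI).1.
  rewrite -!derive1E => Y2' Y1'.
  by rewrite /D; apply: is_derive_eq; rewrite /GRing.scale !fctE /=; ring.
have D'_le r : 0 < r < T -> derive1 D r <= g * (D r + eta ^+ 2).
  move=> rI; have r0 : 0 <= r < T by case/andP: rI => /ltW -> ->.
  rewrite derive1E; have /@derive_val -> := dD r rI.
  rewrite (dY1 r rI).2 (dY2 r rI).2.
  have /andP[Y1r Y2r] : (Y1 r \in `[m, q]) && (Y2 r \in `[m, q]) by rewrite Y1I ?Y2I.
  have := drift_dist_le (klipschitz_itv_le a_lip Y1r Y2r) (klipschitz_itv_le b_lip Y1r Y2r)
    (v1_le r r0) (a_bound Y2r) (v12 r r0).
  move=> /(double_mul_le_of_normr_le L0 A0) /le_trans; apply.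
  rewrite /D /g /= -expr2 -[(Y1 - Y2) r]/(Y1 r - Y2 r).
  have := sqr_ge0 (Y1 r - Y2 r); have := mulr_ge0 L0 (sqr_ge0 eta); have := sqr_ge0 eta; nra.
have := gronwall_affine cD (fun r rI => ex_derive (is_derive := dD r rI)) D'_le sI.
rewrite /D /= -[(Y1 - Y2) 0]/(Y1 0 - Y2 0) -[(Y1 - Y2) s]/(Y1 s - Y2 s).
rewrite Y10 Y20 subrr mul0r add0r -expr2 => Ds.
have T0 : 0 <= T by case/andP: sI => s0 /(le_lt_trans s0) /ltW.
have g0 : 0 <= g by rewrite /g; lra.
have gT : 1 <= expR (g * T) by rewrite -expR0 ler_expR mulr_ge0.
have gsT : expR (g * s) <= expR (g * T) ^+ 2.
  rewrite expr2 (le_trans _ (ler_peMl _ gT)) ?ler_expR ?ler_wpM2l ?expR_ge0 //.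
  by case/andP: sI => _ /ltW.
rewrite -ler_sqr ?nnegrE ?mulr_ge0 ?expR_ge0 // real_normK ?num_real // exprMn.
have := ler_wpM2l (sqr_ge0 eta) gsT; have := sqr_ge0 eta; lra.
Qed.

End Characteristics.

Theorem mainTheorem6 (R : realType) (T rho : R) (a b nfrak : R -> R)
  (Phi0 uin delta : R) (u : R -> R) (un : nat -> R -> R)
  (X : R -> R -> R) (Xn : nat -> R -> R -> R) :
  0 < T -> 0 < rho ->
  (* a, b : [0,oo) -> [0,oo) *)
  (forall x, 0 <= x -> 0 <= a x) -> (forall x, 0 <= x -> 0 <= b x) ->
  (* C^0([0,oo)) *)
  {within [set x | 0 <= x], continuous a} ->
  {within [set x | 0 <= x], continuous b} ->
  (* C^1(0,oo) *)
  (forall x, 0 < x -> derivable a x 1) -> {in [set x | 0 < x], continuous (derive1 a)} ->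
  (forall x, 0 < x -> derivable b x 1) -> {in [set x | 0 < x], continuous (derive1 b)} ->
  (* a', b' bounded on (1,oo) *)
  (exists M : R, forall x, 1 < x -> `|derive1 a x| <= M) ->
  (exists M : R, forall x, 1 < x -> `|derive1 b x| <= M) ->
  (* a > 0 on (0,oo), 1/a in L^1(0,1) *)
  (forall x, 0 < x -> 0 < a x) ->
  (lebesgue_measure).-integrable [set x : R | 0 < x < 1] (fun x => ((a x)^-1)%:E) ->
  (* Phi = b/a : limit Phi0 at 0+, Phi0 < rho, Phi' in L^1(0,1) *)
  (fun x => b x / a x) x @[x --> 0^'+] --> Phi0 ->
  Phi0 < rho ->
  (lebesgue_measure).-integrable [set x : R | 0 < x < 1]
     (fun x => (derive1 (fun y => b y / a y) x)%:E) ->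
  (* nfrak nonnegative and continuous on [Phi0,oo) *)
  (forall x, Phi0 <= x -> 0 <= nfrak x) ->
  {within [set x | Phi0 <= x], continuous nfrak} ->
  (* u^in and delta *)
  Phi0 < uin -> uin <= rho -> 0 < delta -> 2 * delta < uin - Phi0 ->
  (* u^n in B_delta, u^n -> u uniformly on [0,T) *)
  (forall n, in_Bdelta T rho Phi0 delta uin (un n)) ->
  in_Bdelta T rho Phi0 delta uin u ->
  unif_cvg_on [set t | 0 <= t < T] un u ->
  (* corresponding characteristics *)
  (forall x, 0 < x -> characteristic a b u T x (X x)) ->
  (forall n x, 0 < x -> characteristic a b (un n) T x (Xn n x)) ->
  forall x, 0 < x -> unif_cvg_on [set s | 0 <= s < T] (fun n => Xn n x) (X x).
Proof.
move=> _ _ a_ge0 b_ge0 ca _ da da' db db' [Ma a'_bnd] _ a_gt0 _ Phi_lim _ _ _ _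
  _ _ delta0 _ unB uB un_u X_char Xn_char x x0.
have [c [M [c0 M0 a_le]]] :=
  linear_growth_of_derive1_bounded ca (fun y y1 => da y (lt_trans ltr01 y1)) a'_bnd.
have a_itv y : 0 <= y -> 0 <= a y <= M * (y + c) by move=> y0; rewrite a_ge0 ?a_le.
have [m [q [m0 mq char_itv]]] := characteristic_uniform_bounds T rho uin delta0 x0 a_gt0
  Phi_lim c0 (ltW M0) a_itv b_ge0.
have [La La0 a_lip] := derivable_lipschitz_pos m0 mq da da'.
have [Lb Lb0 b_lip] := derivable_lipschitz_pos m0 mq db db'.
have a_bound y : y \in `[m, q] -> `|a y| <= M * (q + c).
  move=> yI; have y0 : 0 <= y by rewrite (le_trans (ltW m0)) ?(itvP yI).
  have /andP[ay0 ayM] := a_itv y y0; rewrite ger0_norm // (le_trans ayM) //.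
  by rewrite ler_wpM2l ?lerD2r ?(itvP yI) // ltW.
pose E := expR ((2 * (La * rho + Lb) + M * (q + c) + 1) * T).
apply: (unif_cvg_on_transfer (expR_ge0 _ : 0 <= E) un_u) => n eta _ un_eta s sI.
apply: (characteristic_stable La0 Lb0 a_lip b_lip a_bound _ un_eta
  (Xn_char n x x0) (X_char x x0)) => //.
- by have [_ [_ []]] := unB n.
- exact: char_itv (unB n) (Xn_char n x x0).
- exact: char_itv uB (X_char x x0).
Qed.
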